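(* Let $\lambda>0$, $T\ge 1$, $X>0$, $Y>0$, and let $x_1,\dots,x_T\in\mathbb{R}^d$ with $\|x_t\|_2\le X$ and $y_1,\dots,y_T\in[-Y,Y]$ be arbitrary. Then for $\mathcal{A}\in\{\texttt{r},\texttt{f}\}$, $$R_T^{\mathcal{A}}\le c^{\mathcal{A}}\,(Y^{\mathcal{A}})^2\, d\log\Big(1+\frac{TX^2}{\lambda d}\Big)+\frac{\lambda\,(Y^{\mathcal{A}})^2\,T}{\lambda_{r_T}(G_T(0))},$$ where $c^{\texttt{r}}=4$, $c^{\texttt{f}}=1$, $Y^{\texttt{r}}=\max\{Y,\max_{1\le t\le T}|x_t^\top\theta^{\texttt{r}}_{t-1}|\}$, $Y^{\texttt{f}}=Y$, $r_T=\operatorname{rank}(G_T(0))$ and $\lambda_{r_T}(G_T(0))$ is the smallest positive eigenvalue of $G_T(0)$.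
   Context: Online regression with square loss: at each round $t$ the learner receives $x_t\in\mathbb{R}^d$, predicts $\hat y_t=x_t^\top\theta_{t-1}$, then observes $y_t$ and incurs $\ell_t=(\hat y_t-y_t)^2$. Write $\ell_t(\theta)=(x_t^\top\theta-y_t)^2$, $L_T(\theta)=\sum_{t=1}^T\ell_t(\theta)$, $L_T^{\mathcal{A}}=\sum_{t=1}^T(x_t^\top\theta^{\mathcal{A}}_{t-1}-y_t)^2$, and the regret $R_T^{\mathcal{A}}=L_T^{\mathcal{A}}-\min_{\theta\in\mathbb{R}^d}L_T(\theta)$. Let $G_t(\lambda)=\lambda I+\sum_{q=1}^t x_qx_q^\top$ and $b_t=\sum_{q=1}^t x_qy_q$. Online ridge regression ($\mathcal{A}=\texttt{r}$) uses $\theta^{\texttt{r}}_t=G_t(\lambda)^{-1}b_t$ (so $\theta_0^{\texttt r}=0$). The forward algorithm ($\mathcal{A}=\texttt{f}$) uses $\theta^{\texttt{f}}_{t-1}=G_t(\lambda)^{-1}b_{t-1}$, i.e. $\theta^{\texttt f}_{t-1}\in\arg\min_\theta L_{t-1}(\theta)+(x_t^\top\theta)^2+\lambda\|\theta\|_2^2$. *)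

From HB Require Import structures.
From mathcomp Require Import all_boot all_order all_algebra.
From mathcomp Require Import all_classical all_reals all_analysis.
Set Implicit Arguments. Unset Strict Implicit. Unset Printing Implicit Defensive.
Import Order.TTheory GRing.Theory Num.Theory.
Local Open Scope ring_scope.

Section OnlineRegression.
Variables (R : realType) (d : nat).

Definition dotv (u v : 'cV[R]_d) : R := (u^T *m v) 0 0.

(* rounds are indexed 1..T; x t, y t are the data of round t *)
Variables (x : nat -> 'cV[R]_d) (y : nat -> R).

Definition Gmx (t : nat) (lam : R) : 'M[R]_d :=
  lam%:M + \sum_(1 <= q < t.+1) (x q *m (x q)^T).

Definition bvec (t : nat) : 'cV[R]_d := \sum_(1 <= q < t.+1) (y q *: x q).

Definition theta_r (lam : R) (t : nat) : 'cV[R]_d := invmx (Gmx t lam) *m bvec t.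

(* forward: theta^f_{t-1} = G_t(lam)^{-1} b_{t-1}; indexed by t here *)
Definition theta_f_prev (lam : R) (t : nat) : 'cV[R]_d :=
  invmx (Gmx t lam) *m bvec t.-1.

Definition pred_r (lam : R) (t : nat) : R := dotv (x t) (theta_r lam t.-1).
Definition pred_f (lam : R) (t : nat) : R := dotv (x t) (theta_f_prev lam t).

Definition loss_t (t : nat) (th : 'cV[R]_d) : R := (dotv (x t) th - y t) ^+ 2.
Definition LT (T : nat) (th : 'cV[R]_d) : R := \sum_(1 <= t < T.+1) loss_t t th.

Definition L_r (lam : R) (T : nat) : R :=
  \sum_(1 <= t < T.+1) (pred_r lam t - y t) ^+ 2.
Definition L_f (lam : R) (T : nat) : R :=
  \sum_(1 <= t < T.+1) (pred_f lam t - y t) ^+ 2.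

(* min_theta L_T(theta) (the infimum is attained: least squares) *)
Definition Lstar (T : nat) : R := inf [set LT T th | th in [set: 'cV[R]_d]].

Definition regret_r (lam : R) (T : nat) : R := L_r lam T - Lstar T.
Definition regret_f (lam : R) (T : nat) : R := L_f lam T - Lstar T.

Definition Yr (lam Y : R) (T : nat) : R :=
  \big[Num.max/Y]_(1 <= t < T.+1) `|pred_r lam t|.

End OnlineRegression.

Definition smallest_pos_eigenvalue (R : realType) (n : nat) (M : 'M[R]_n) (mu : R) :=
  [/\ eigenvalue M mu, 0 < mu &
      forall nu, eigenvalue M nu -> 0 < nu -> mu <= nu].

From HB Require Import structures.
From mathcomp Require Import all_boot all_order all_algebra.
From mathcomp Require Import all_classical all_reals all_analysis.
From mathcomp Require Import complex.
From mathcomp Require Import ring lra.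
Import Order.TTheory GRing.Theory Num.Theory.
Local Open Scope ring_scope.
Set Implicit Arguments. Unset Strict Implicit. Unset Printing Implicit Defensive.

(* Both algorithms are compared with m_T = min_th L_T(th) + lam |th|^2, the
   value attained by the ridge estimate theta^r_T.  With the leverage
   a_t = x_t^T G_t(lam)^-1 x_t, the rank-one update G_t = G_{t-1} + x_t x_t^T
   gives m_t = m_{t-1} + (1 - a_t) (x_t^T theta^r_{t-1} - y_t)^2; hence
   L^r_T = m_T + sum_t a_t (x_t^T theta^r_{t-1} - y_t)^2, and, since the forward
   prediction is (1 - a_t) x_t^T theta^r_{t-1}, L^f_T <= m_T + Y^2 sum_t a_t.
   The matrix determinant lemma gives a_t <= ln det G_t - ln det G_{t-1}, and
   AM-GM on the eigenvalues of G_T(lam) bounds the telescoped sum by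
   d ln (1 + T X^2 / (lam d)).  Finally m_T <= L_T(u) + lam |u|^2 for the
   least-squares solution u in the range of G_T(0), and for it
   lambda_{r_T} |u|^2 <= u^T G_T(0) u = b_T^T u <= T Y^2. *)

Lemma det_1B_rank1 (R : comNzRingType) n (u v : 'cV[R]_n) :
  \det (1%:M - u *m v^T) = 1 - (v^T *m u) 0 0.
Proof.
pose B := block_mx (1%:M : 'M[R]_n) u v^T (1%:M : 'M[R]_1).
have B_lower : B = block_mx 1%:M 0 v^T 1%:M *m block_mx 1%:M u 0 (1%:M - v^T *m u).
  by rewrite mulmx_block !(mul1mx, mul0mx, mulmx0, mulmx1, addr0, add0r) addrC subrK.
have B_upper : B = block_mx 1%:M u 0 1%:M *m block_mx (1%:M - u *m v^T) 0 v^T 1%:M.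
  by rewrite mulmx_block !(mul1mx, mul0mx, mulmx0, mulmx1, addr0, add0r) subrK.
have := congr1 determinant (etrans (esym B_lower) B_upper).
rewrite !det_mulmx det_lblock det_ublock det_ublock det_lblock !det1 !mul1r !mulr1.
by move=> <-; rewrite det_mx11 !mxE eqxx mulr1n.
Qed.

Section RealSymmetricSpectral.
Variable R : rcfType.
Local Notation C := (R[i]).
Local Notation toC := (real_complex R).
Local Notation mC := (map_mx toC).
Local Open Scope sesquilinear_scope.

Lemma map_real_conjT m n (M : 'M[R]_(m, n)) : (mC M)^t* = mC M^T.
Proof. by apply/matrixP => i j; rewrite !mxE; exact: conjc_real. Qed.

Lemma unitarymx_tCK n (P : 'M[C]_n) : P \is unitarymx -> P^t* *m P = 1%:M.
Proof. by rewrite -trmxC_unitary => /unitarymxP; rewrite trmxCK. Qed.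

(* [M = P^* diag(r) P] with [P] unitary: a spectral decomposition of a real
   matrix, taken over [R[i]] because that is where the library's spectral
   theorem lives. *)
Definition real_spectral n (M : 'M[R]_n) (P : 'M[C]_n) (r : 'I_n -> R) :=
  P \is unitarymx /\ mC M = P^t* *m diag_mx (\row_i toC (r i)) *m P.

Lemma realsym_spectral n (M : 'M[R]_n) : M^T = M ->
  exists P r, real_spectral M P r.
Proof.
move=> Msym.
have Mherm : mC M \is hermsymmx.
  by apply/is_hermitianmxP; rewrite expr0 scale1r map_real_conjT Msym.
have /orthomx_spectralP := hermitian_normalmx Mherm.
have /mxOverP Dreal := hermitian_spectral_diag_real Mherm.
set P := spectralmx _; set D := spectral_diag _ => MPD.
have Punitary : P \is unitarymx := spectral_unitarymx _.
exists P, (fun i => complex.Re (D 0 i)); split => //.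
have -> : \row_i toC (complex.Re (D 0 i)) = D.
  by apply/rowP => i; rewrite mxE RRe_real.
by rewrite MPD invmx_unitary.
Qed.

Section Decomposition.
Variables (n : nat) (M : 'M[R]_n) (P : 'M[C]_n) (r : 'I_n -> R).
Hypothesis MPr : real_spectral M P r.
Local Notation D := (diag_mx (\row_i toC (r i))).

Lemma real_spectral_mulmx : P *m mC M = D *m P.
Proof.
by case: MPr => /unitarymxP PPt ->; rewrite !mulmxA PPt mul1mx.
Qed.

Lemma real_spectral_diag : D = P *m mC M *m P^t*.
Proof. by case: MPr => /unitarymxP PPt _; rewrite real_spectral_mulmx -mulmxA PPt mulmx1. Qed.

Lemma real_spectral_eigenvalue i : eigenvalue M (r i).
Proof.
case: MPr => /unitarymxP PPt _.
rewrite eigenvalue_root_char -(fmorph_root toC) map_char_poly -eigenvalue_root_char.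
apply/eigenvalueP; exists (row i P).
  by rewrite -row_mul real_spectral_mulmx mul_diag_mx; apply/rowP => j; rewrite !mxE.
apply/eqP => Pi0; have := congr1 (row i) PPt.
rewrite row_mul Pi0 mul0mx => /rowP /(_ i); rewrite !mxE eqxx /= => /eqP.
by rewrite eq_sym oner_eq0.
Qed.

Lemma real_spectral_quad (w : 'cV[R]_n) (Pw := P *m mC w) :
  toC ((w^T *m w) 0 0) = \sum_j (Pw j 0)^* * Pw j 0 /\
  toC ((w^T *m (M *m w)) 0 0) = \sum_j (Pw j 0)^* * toC (r j) * Pw j 0.
Proof.
case: MPr => /unitarymx_tCK PtP MPD.
have Pwt : Pw^t* = mC w^T *m P^t* by rewrite trmx_mul map_mxM map_real_conjT.
split.
  have -> : toC ((w^T *m w) 0 0) = (Pw^t* *m Pw) 0 0.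
    by rewrite Pwt /Pw mulmxA -(mulmxA _ _ P) PtP mulmx1 -map_mxM [RHS]mxE.
  by rewrite mxE; apply: eq_bigr => j _; rewrite !mxE.
have -> : toC ((w^T *m (M *m w)) 0 0) = (Pw^t* *m D *m Pw) 0 0.
  have -> : Pw^t* *m D *m Pw = mC w^T *m (P^t* *m D *m P) *m mC w.
    by rewrite Pwt /Pw !mulmxA.
  by rewrite -MPD -!map_mxM [RHS]mxE mulmxA.
rewrite mxE; apply: eq_bigr => j _; rewrite mul_mx_diag !mxE.
by congr (_ * _ * _); rewrite !mxE.
Qed.

End Decomposition.

Section Gram.
Variables (I : eqType) (n : nat) (s : seq I) (v : I -> 'cV[R]_n).

Definition gram_mx (c : R) : 'M[R]_n := c%:M + \sum_(q <- s) v q *m (v q)^T.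

Lemma gram_mx_sym c : (gram_mx c)^T = gram_mx c.
Proof.
rewrite linearD /= tr_scalar_mx linear_sum /=; congr (_ + _).
by apply: eq_bigr => q _; rewrite trmx_mul trmxK.
Qed.

Lemma gram_spectral_eigenE c P r : real_spectral (gram_mx c) P r ->
  forall i, toC (r i) = toC c + \sum_(q <- s) (P *m mC (v q)) i 0 * ((P *m mC (v q)) i 0)^*.
Proof.
move=> MPr i; have [/unitarymxP PPt _] := MPr.
have -> : toC (r i) = diag_mx (\row_i toC (r i)) i i by rewrite !mxE eqxx mulr1n.
rewrite (real_spectral_diag MPr) /gram_mx map_mxD raddf_sum /= mulmxDr mulmxDl.
rewrite map_scalar_mx /= mul_mx_scalar.
rewrite -scalemxAl PPt mxE [X in X + _]mxE mxE eqxx mulr1; congr (_ + _).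
rewrite mulmx_sumr mulmx_suml summxE; apply: eq_bigr => q _.
have -> : P *m mC (v q *m (v q)^T) *m P^t* = (P *m mC (v q)) *m (P *m mC (v q))^t*.
  by rewrite map_mxM [in RHS]trmx_mul [in RHS]map_mxM map_real_conjT !mulmxA.
by rewrite mxE big_ord1 !mxE.
Qed.

Lemma gram_spectral_ge c P r : real_spectral (gram_mx c) P r -> forall i, c <= r i.
Proof.
move=> MPr i; rewrite -lecR (gram_spectral_eigenE MPr i) lerDl.
by apply: sumr_ge0 => q _; exact: mul_conjC_ge0.
Qed.

Lemma gram_det_tr c : exists r : 'I_n -> R, [/\ forall i, c <= r i,
  \det (gram_mx c) = \prod_i r i & \tr (gram_mx c) = \sum_i r i].
Proof.
have [P [r MPr]] := realsym_spectral (gram_mx_sym c).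
have [/unitarymxP PPt MPD] := MPr.
exists r; split; first exact: gram_spectral_ge MPr.
- apply: complexI; rewrite -det_map_mx MPD !det_mulmx mulrC mulrA -det_mulmx PPt det1 mul1r.
  by rewrite det_diag rmorph_prod; apply: eq_bigr => i _; rewrite mxE.
- have trC : \tr (mC (gram_mx c)) = toC (\tr (gram_mx c)).
    by rewrite /mxtrace rmorph_sum; apply: eq_bigr => i _; rewrite mxE.
  apply: complexI; rewrite -trC MPD mxtrace_mulC mulmxA PPt mul1mx mxtrace_diag.
  by rewrite raddf_sum; apply: eq_bigr => i _; rewrite mxE.
Qed.

Lemma gram_rayleigh mu (z : 'cV[R]_n) (M := gram_mx 0) (w := M *m z) :
  (forall nu, eigenvalue M nu -> 0 < nu -> mu <= nu) ->
  mu * (w^T *m w) 0 0 <= (w^T *m (M *m w)) 0 0.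
Proof.
move=> mu_le.
have [P [r MPr]] := realsym_spectral (gram_mx_sym 0).
have r_ge0 := gram_spectral_ge MPr.
have [ww wMw] := real_spectral_quad MPr w.
have Pw j : (P *m mC w) j 0 = toC (r j) * (P *m mC z) j 0.
  by rewrite map_mxM mulmxA (real_spectral_mulmx MPr) -mulmxA mul_diag_mx !mxE.
rewrite -lecR rmorphM /= ww wMw mulr_sumr; apply: ler_sum => j _.
have [rj0|rj_neq0] := eqVneq (r j) 0.
  by rewrite Pw rj0 rmorph0 !mul0r rmorph0 !mulr0.
have rj_gt0 : 0 < r j by rewrite lt0r rj_neq0 r_ge0.
set o := (P *m mC w) j 0.
have -> : o^* * toC (r j) * o = toC (r j) * (o^* * o) by ring.
apply: ler_wpM2r; first by rewrite mulrC mul_conjC_ge0.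
by rewrite lecR mu_le ?(real_spectral_eigenvalue MPr).
Qed.

(* In an eigenbasis of [M := gram_mx 0], the right-hand side [b] has no
   component along [ker M] since no [v q] has one, so [M^2] is invertible on the
   coordinates where [b] lives. *)
Lemma gram_sqr_solvable (y : I -> R) :
  exists z, gram_mx 0 *m (gram_mx 0 *m z) = \sum_(q <- s) y q *: v q.
Proof.
set b := \sum_(q <- s) y q *: v q.
have [P [r MPr]] := realsym_spectral (gram_mx_sym 0).
have [/unitarymxP PPt _] := MPr; have PtP := unitarymx_tCK (proj1 MPr).
have Pb0 i : r i = 0 -> (P *m mC b) i 0 = 0.
  move=> ri0; have /eqP := gram_spectral_eigenE MPr i; rewrite ri0 rmorph0 add0r eq_sym.
  rewrite psumr_eq0 => [/allP Pv0|q _]; last exact: mul_conjC_ge0.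
  rewrite /b raddf_sum /= mulmx_sumr summxE big_seq big1 // => q qs.
  rewrite map_mxZ -scalemxAr mxE.
  by move: (Pv0 q qs); rewrite mul_conjC_eq0 => /eqP ->; rewrite mulr0.
pose zC := P^t* *m diag_mx (\row_i (toC (r i))^-2) *m P *m mC b.
exists (map_mx (@complex.Re R) zC).
have Re_mulmx m p (A : 'M[R]_(m, n)) (Z : 'M[C]_(n, p)) :
    A *m map_mx (@complex.Re R) Z = map_mx (@complex.Re R) (mC A *m Z).
  apply/matrixP => i j; rewrite !mxE raddf_sum; apply: eq_bigr => k _.
  by rewrite !mxE; case: (Z k j) => ? ?; rewrite /= mul0r subr0.
rewrite !Re_mulmx; suff -> : mC (gram_mx 0) *m (mC (gram_mx 0) *m zC) = mC b.
  by apply/matrixP => i j; rewrite !mxE.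
suff PMMz : P *m (mC (gram_mx 0) *m (mC (gram_mx 0) *m zC)) = P *m mC b.
  by rewrite -[LHS]mul1mx -PtP -mulmxA PMMz mulmxA PtP mul1mx.
have PM := real_spectral_mulmx MPr.
rewrite mulmxA [P *m _]PM -mulmxA [P *m (_ *m zC)]mulmxA [P *m _]PM -mulmxA /zC.
rewrite [P *m _]mulmxA [P *m _]mulmxA [P *m _]mulmxA [P *m _]PPt mul1mx -mulmxA.
set X := P *m mC b in Pb0 *; clearbody X.
apply/matrixP => i j; rewrite (ord1 j) !mul_diag_mx !mxE.
have [ri0|ri_neq0] := eqVneq (r i) 0; first by rewrite Pb0 // ri0 !mul0r.
by field; apply/eqP => /(congr1 (@complex.Re R)) /= /eqP; rewrite (negbTE ri_neq0).
Qed.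

End Gram.
End RealSymmetricSpectral.

Lemma prodr_le_mean_expn (R : realFieldType) n (r : 'I_n -> R) :
  (forall i, 0 <= r i) -> \prod_i r i <= ((\sum_i r i) / n%:R) ^+ n.
Proof.
move=> r_ge0; have := (@leif_AGM _ _ 'I_n _ (fun i _ => r_ge0 i)).1.
by rewrite card_ord.
Qed.

Lemma ln_det_gram_le (R : realType) (I : eqType) n (s : seq I) (v : I -> 'cV[R]_n) c :
  0 < c -> ln (\det (gram_mx s v c)) <= n%:R * ln (\tr (gram_mx s v c) / n%:R).
Proof.
move=> c_gt0; have [r [r_ge -> ->]] := gram_det_tr s v c.
have r_gt0 i : 0 < r i := lt_le_trans c_gt0 (r_ge i).
clear s v r_ge; case: n r r_gt0 => [|n] r r_gt0; first by rewrite big_ord0 ln1 mul0r.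
have sum_gt0 : 0 < \sum_i r i.
  by rewrite (bigD1 ord0) //= ltr_pwDl ?sumr_ge0 // => i _; exact: ltW.
rewrite mulr_natl -lnXn ?divr_gt0 // ler_ln ?posrE ?prodr_gt0 ?exprn_gt0 ?divr_gt0 //.
by apply: prodr_le_mean_expn => i; exact: ltW.
Qed.

Section DotProduct.
Variables (R : realType) (d : nat).
Implicit Types (u v w : 'cV[R]_d) (M : 'M[R]_d).

Lemma dotvC u v : dotv u v = dotv v u.
Proof. by rewrite /dotv -[in RHS](trmxK u) -trmx_mul [RHS]mxE. Qed.

Lemma dotvDr u v w : dotv u (v + w) = dotv u v + dotv u w.
Proof. by rewrite /dotv mulmxDr mxE. Qed.

Lemma dotvDl u v w : dotv (v + w) u = dotv v u + dotv w u.
Proof. by rewrite dotvC dotvDr !(dotvC u). Qed.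

Lemma dotvZr a u v : dotv u (a *: v) = a * dotv u v.
Proof. by rewrite /dotv -scalemxAr mxE. Qed.

Lemma dotvZl a u v : dotv (a *: u) v = a * dotv u v.
Proof. by rewrite dotvC dotvZr dotvC. Qed.

Lemma dotvBr u v w : dotv u (v - w) = dotv u v - dotv u w.
Proof. by rewrite -scaleN1r dotvDr dotvZr mulN1r. Qed.

Lemma dotvBl u v w : dotv (v - w) u = dotv v u - dotv w u.
Proof. by rewrite dotvC dotvBr !(dotvC u). Qed.

Lemma dotv0l u : dotv 0 u = 0.
Proof. by rewrite /dotv trmx0 mul0mx mxE. Qed.

Lemma dotv_sumr I (s : seq I) (F : I -> 'cV[R]_d) u :
  dotv u (\sum_(i <- s) F i) = \sum_(i <- s) dotv u (F i).
Proof. by rewrite /dotv mulmx_sumr summxE. Qed.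

Lemma dotv_suml I (s : seq I) (F : I -> 'cV[R]_d) u :
  dotv (\sum_(i <- s) F i) u = \sum_(i <- s) dotv (F i) u.
Proof. by rewrite dotvC dotv_sumr; apply: eq_bigr => i _; rewrite dotvC. Qed.

Lemma dotv_mulmxr u M v : dotv u (M *m v) = dotv (M^T *m u) v.
Proof. by rewrite /dotv trmx_mul trmxK mulmxA. Qed.

Lemma dotv_ge0 u : 0 <= dotv u u.
Proof. by rewrite /dotv mxE sumr_ge0 // => i _; rewrite mxE -expr2 sqr_ge0. Qed.

Lemma mulmx_outer u v w : u *m v^T *m w = dotv v w *: u.
Proof. by rewrite -mulmxA [v^T *m w]mx11_scalar mul_mx_scalar. Qed.

End DotProduct.

Lemma sum_nat_le_const (R : numDomainType) (F : nat -> R) (K : R) (T : nat) :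
  (forall t, (1 <= t <= T)%N -> F t <= K) -> \sum_(1 <= t < T.+1) F t <= T%:R * K.
Proof.
move=> F_le; rewrite mulr_natl.
have -> : K *+ T = \sum_(1 <= t < T.+1) K by rewrite sumr_const_nat subn1.
by apply: ler_sum_nat => t /andP[t_ge1 t_lt]; apply: F_le; rewrite t_ge1 -ltnS.
Qed.

Lemma forward_loss_le (R : realDomainType) (p y a K : R) :
  0 <= a <= 1 -> y ^+ 2 <= K ->
  (p * (1 - a) - y) ^+ 2 <= (p - y) ^+ 2 * (1 - a) + K * a.
Proof.
(* (p - y)^2 (1 - a) + y^2 a - (p (1 - a) - y)^2 = p^2 a (1 - a) *)
move=> /andP[a_ge0 a_le1] y2_le.
have a'_ge0 : 0 <= 1 - a by rewrite subr_ge0.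
have := mulr_ge0 (mulr_ge0 (sqr_ge0 p) a_ge0) a'_ge0.
have := ler_wpM2r a_ge0 y2_le.
nra.
Qed.

Section GramOfData.
Variables (R : realType) (d : nat) (x : nat -> 'cV[R]_d).

Lemma Gmx_sym t c : (Gmx x t c)^T = Gmx x t c.
Proof. exact: gram_mx_sym. Qed.

Lemma Gmx_recr t c : Gmx x t.+1 c = Gmx x t c + x t.+1 *m (x t.+1)^T.
Proof. by rewrite /Gmx big_nat_recr //= addrA. Qed.

Lemma dotv_Gmx t c v :
  dotv v (Gmx x t c *m v) = c * dotv v v + \sum_(1 <= q < t.+1) dotv (x q) v ^+ 2.
Proof.
rewrite mulmxDl mul_scalar_mx dotvDr dotvZr mulmx_suml dotv_sumr; congr (_ + _).
by apply: eq_bigr => q _; rewrite mulmx_outer dotvZr dotvC.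
Qed.

Lemma dotv_Gmx_ge0 t c v : 0 <= c -> 0 <= dotv v (Gmx x t c *m v).
Proof.
move=> c_ge0; rewrite dotv_Gmx addr_ge0 ?mulr_ge0 ?dotv_ge0 //.
by apply: sumr_ge0 => q _; exact: sqr_ge0.
Qed.

Lemma det_Gmx_gt0 t c : 0 < c -> 0 < \det (Gmx x t c).
Proof.
move=> c_gt0; have [r [r_ge -> _]] := gram_det_tr (index_iota 1 t.+1) x c.
by apply: prodr_gt0 => i _; apply: lt_le_trans (r_ge i).
Qed.

Lemma mxtrace_Gmx t c : \tr (Gmx x t c) = c *+ d + \sum_(1 <= q < t.+1) dotv (x q) (x q).
Proof.
rewrite mxtraceD mxtrace_scalar raddf_sum /=; congr (_ + _).
by apply: eq_bigr => q _; rewrite mxtrace_mulC trace_mx11.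
Qed.

End GramOfData.

Section RidgeObjective.
Variables (R : realType) (d : nat) (x : nat -> 'cV[R]_d) (y : nat -> R) (T : nat).
Local Notation b := (bvec x y T).

Definition ridge_obj (c : R) (th : 'cV[R]_d) : R := LT x y T th + c * dotv th th.

Lemma ridge_objE c th : ridge_obj c th =
  \sum_(1 <= q < T.+1) y q ^+ 2 - 2 * dotv b th + dotv th (Gmx x T c *m th).
Proof.
rewrite dotv_Gmx /ridge_obj /LT /loss_t /bvec dotv_suml.
have -> : \sum_(1 <= t < T.+1) (dotv (x t) th - y t) ^+ 2 =
    \sum_(1 <= t < T.+1) (y t ^+ 2 - 2 * dotv (y t *: x t) th + dotv (x t) th ^+ 2).
  by apply: eq_bigr => q _; rewrite dotvZl; ring.
by rewrite !big_split /= sumrN -mulr_sumr; ring.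
Qed.

Lemma ridge_obj_normal c w : Gmx x T c *m w = b ->
  ridge_obj c w = \sum_(1 <= q < T.+1) y q ^+ 2 - dotv b w.
Proof. by move=> Gw; rewrite ridge_objE Gw [dotv w _]dotvC; ring. Qed.

(* Completing the square: ridge_obj c th = ridge_obj c w + (th - w)^T G (th - w). *)
Lemma ridge_obj_min c w th : 0 <= c -> Gmx x T c *m w = b ->
  ridge_obj c w <= ridge_obj c th.
Proof.
move=> c_ge0 Gw; rewrite !ridge_objE -Gw.
have := dotv_Gmx_ge0 x T (th - w) c_ge0.
have G_swap u v : dotv u (Gmx x T c *m v) = dotv v (Gmx x T c *m u).
  by rewrite dotv_mulmxr Gmx_sym dotvC.
rewrite mulmxBr !dotvBr !dotvBl (G_swap w th) ![dotv (Gmx x T c *m _) _]dotvC.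
lra.
Qed.

Lemma LT_le_Lstar u : Gmx x T 0 *m u = b -> LT x y T u <= Lstar x y T.
Proof.
move=> Gu; apply: lb_le_inf; first by exists (LT x y T u), u.
move=> _ [th _ <-]; have := ridge_obj_min th (lexx 0) Gu.
by rewrite /ridge_obj !mul0r !addr0.
Qed.

End RidgeObjective.

Section OnlineRidge.
Variables (R : realType) (d : nat) (x : nat -> 'cV[R]_d) (y : nat -> R) (lam : R).
Hypothesis lam_gt0 : 0 < lam.

Local Notation G t := (Gmx x t lam).
Local Notation b t := (bvec x y t).
Local Notation th t := (theta_r x y lam t).

Definition leverage t := dotv (x t) (invmx (G t) *m x t).

Definition ridge_value t := \sum_(1 <= q < t.+1) y q ^+ 2 - dotv (b t) (th t).

Lemma Gmx_unit t : G t \in unitmx.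
Proof. by rewrite unitmxE unitfE gt_eqF ?det_Gmx_gt0. Qed.

Lemma Gmx_theta_r t : G t *m th t = b t.
Proof. by rewrite mulmxA mulmxV ?Gmx_unit ?mul1mx. Qed.

Lemma bvec_recr t : b t.+1 = b t + y t.+1 *: x t.+1.
Proof. by rewrite /bvec big_nat_recr. Qed.

Lemma ridge_value0 : ridge_value 0 = 0.
Proof. by rewrite /ridge_value /bvec !big_geq // dotv0l subr0. Qed.

Lemma ridge_valueE T : ridge_value T = ridge_obj x y T lam (th T).
Proof. by rewrite (ridge_obj_normal (Gmx_theta_r T)). Qed.

Lemma leverage_ge0 t : 0 <= leverage t.
Proof.
rewrite /leverage -{1}[x t](mulKVmx (Gmx_unit t)) dotvC.
exact/dotv_Gmx_ge0/ltW.
Qed.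

Section Round.
Variable t : nat.
Local Notation p := (pred_r x y lam t.+1).
Local Notation a := (leverage t.+1).
Local Notation g := (invmx (G t.+1) *m x t.+1).

Lemma Gmx_recr_theta_r : G t.+1 *m th t = b t + p *: x t.+1.
Proof. by rewrite Gmx_recr mulmxDl Gmx_theta_r mulmx_outer. Qed.

Lemma theta_r_recr : th t.+1 = th t + (y t.+1 - p) *: g.
Proof.
rewrite -[th t](mulKmx (Gmx_unit t.+1)) Gmx_recr_theta_r scalemxAr -mulmxDr.
by rewrite -addrA -scalerDl subrKC -bvec_recr.
Qed.

Lemma theta_f_prev_recr : theta_f_prev x y lam t.+1 = th t - p *: g.
Proof.
rewrite /theta_f_prev /= scalemxAr -{1}[th t](mulKmx (Gmx_unit t.+1)) -mulmxBr.
by rewrite Gmx_recr_theta_r addrK.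
Qed.

Lemma pred_f_recr : pred_f x y lam t.+1 = p * (1 - a).
Proof. by rewrite /pred_f theta_f_prev_recr dotvBr dotvZr mulrBr mulr1. Qed.

Lemma det_Gmx_recr : \det (G t) = \det (G t.+1) * (1 - a).
Proof.
have -> : G t = G t.+1 *m (1%:M - g *m (x t.+1)^T).
  by rewrite mulmxBr mulmx1 !mulmxA mulmxV ?Gmx_unit // mul1mx Gmx_recr addrK.
by rewrite det_mulmx det_1B_rank1.
Qed.

Lemma leverage_lt1 : a < 1.
Proof.
have := det_Gmx_gt0 x t lam_gt0.
by rewrite det_Gmx_recr pmulr_rgt0 ?det_Gmx_gt0 // subr_gt0.
Qed.

Lemma leverage_le_ln_det : a <= ln (\det (G t.+1)) - ln (\det (G t)).
Proof.
rewrite det_Gmx_recr lnM ?posrE ?det_Gmx_gt0 ?subr_gt0 ?leverage_lt1 //.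
by rewrite opprD addNKr lerNr le_ln1Dx // ltrN2 leverage_lt1.
Qed.

Lemma ridge_value_recr :
  ridge_value t.+1 = ridge_value t + (p - y t.+1) ^+ 2 * (1 - a).
Proof.
have bg : dotv (b t.+1) g = p + (y t.+1 - p) * a.
  rewrite dotv_mulmxr trmx_inv Gmx_sym dotvC.
  by rewrite -/(th t.+1) theta_r_recr dotvDr dotvZr.
rewrite /ridge_value big_nat_recr //= theta_r_recr dotvDr dotvZr bg.
rewrite bvec_recr dotvDl dotvZl -/(pred_r x y lam t.+1); ring.
Qed.

End Round.

Lemma L_r_ridge_value T : L_r x y lam T =
  ridge_value T + \sum_(1 <= t < T.+1) (pred_r x y lam t - y t) ^+ 2 * leverage t.
Proof.
elim: T => [|T IH]; first by rewrite /L_r !big_geq // ridge_value0 addr0.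
rewrite /L_r big_nat_recr //= -/(L_r x y lam T) IH [in RHS]big_nat_recr //= ridge_value_recr.
ring.
Qed.

Lemma L_f_le_ridge_value K T : (forall t, (1 <= t <= T)%N -> y t ^+ 2 <= K) ->
  L_f x y lam T <= ridge_value T + K * \sum_(1 <= t < T.+1) leverage t.
Proof.
elim: T => [|T IH] y_le; first by rewrite /L_f !big_geq // ridge_value0 mulr0 addr0.
have /IH IH' : forall t, (1 <= t <= T)%N -> y t ^+ 2 <= K.
  by move=> t /andP[t_ge1 t_le]; rewrite y_le // t_ge1 ltnW.
rewrite /L_f big_nat_recr //= -/(L_f x y lam T) [in leRHS]big_nat_recr //= ridge_value_recr.
have a_01 : 0 <= leverage T.+1 <= 1 by rewrite leverage_ge0 ltW ?leverage_lt1.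
have := forward_loss_le (pred_r x y lam T.+1) a_01 (y_le T.+1 (leqnn _)).
rewrite pred_f_recr; lra.
Qed.

Lemma sum_leverage_le_ln_det T :
  \sum_(1 <= t < T.+1) leverage t <= ln (\det (G T)) - ln (\det (G 0)).
Proof.
elim: T => [|T IH]; first by rewrite big_geq // subrr.
by rewrite big_nat_recr //=; have := leverage_le_ln_det T; lra.
Qed.

(* The least-squares solution of minimal norm, u = G_T(0) z, is orthogonal to
   ker G_T(0), hence its norm is controlled by the smallest positive eigenvalue. *)
Lemma ridge_value_le_Lstar T K mu : 0 < mu ->
  (forall t, (1 <= t <= T)%N -> y t ^+ 2 <= K) ->
  (forall nu, eigenvalue (Gmx x T 0) nu -> 0 < nu -> mu <= nu) ->
  ridge_value T <= Lstar x y T + lam * K * T%:R / mu.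
Proof.
move=> mu_gt0 y_le mu_le.
have [z G2z] := gram_sqr_solvable (index_iota 1 T.+1) x y.
set u := Gmx x T 0 *m z; have Gu : Gmx x T 0 *m u = b T := G2z.
have bu_le : dotv (b T) u <= T%:R * K.
  have := ridge_obj_normal Gu; rewrite /ridge_obj mul0r addr0.
  have : 0 <= LT x y T u by apply: sumr_ge0 => t _; exact: sqr_ge0.
  have := sum_nat_le_const y_le; lra.
have uu_le : mu * dotv u u <= dotv (b T) u.
  have := gram_rayleigh z mu_le.
  by rewrite -/(dotv u u) -/(dotv u (Gmx x T 0 *m u)) Gu dotvC.
have uu_le' : dotv u u <= T%:R * K / mu.
  by rewrite ler_pdivlMr // mulrC (le_trans uu_le).
have := ler_wpM2l (ltW lam_gt0) uu_le'.
have := LT_le_Lstar Gu.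
have := ridge_obj_min u (ltW lam_gt0) (Gmx_theta_r T); rewrite -ridge_valueE.
rewrite /ridge_obj (_ : lam * K * T%:R / mu = lam * (T%:R * K / mu)); last by ring.
lra.
Qed.

Lemma regret_r_le T K B mu : 0 < mu ->
  (forall t, (1 <= t <= T)%N -> y t ^+ 2 <= K) ->
  (forall nu, eigenvalue (Gmx x T 0) nu -> 0 < nu -> mu <= nu) ->
  (forall t, (1 <= t <= T)%N -> (pred_r x y lam t - y t) ^+ 2 <= B) ->
  regret_r x y lam T <= B * \sum_(1 <= t < T.+1) leverage t + lam * K * T%:R / mu.
Proof.
move=> mu_gt0 y_le mu_le loss_le; rewrite /regret_r L_r_ridge_value mulr_sumr.
have : \sum_(1 <= t < T.+1) (pred_r x y lam t - y t) ^+ 2 * leverage t <=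
       \sum_(1 <= t < T.+1) B * leverage t.
  apply: ler_sum_nat => t /andP[t_ge1 t_lt].
  by rewrite ler_wpM2r ?leverage_ge0 ?loss_le // t_ge1 -ltnS.
have := ridge_value_le_Lstar mu_gt0 y_le mu_le; lra.
Qed.

Lemma regret_f_le T K mu : 0 < mu ->
  (forall t, (1 <= t <= T)%N -> y t ^+ 2 <= K) ->
  (forall nu, eigenvalue (Gmx x T 0) nu -> 0 < nu -> mu <= nu) ->
  regret_f x y lam T <= K * \sum_(1 <= t < T.+1) leverage t + lam * K * T%:R / mu.
Proof.
move=> mu_gt0 y_le mu_le; rewrite /regret_f.
have := L_f_le_ridge_value y_le; have := ridge_value_le_Lstar mu_gt0 y_le mu_le; lra.
Qed.

Lemma Yr_ge Y T : Y <= Yr x y lam Y T.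
Proof. exact: bigmax_ge_id. Qed.

Lemma sqr_pred_r_sub_le Y T t : (1 <= t <= T)%N -> - Y <= y t <= Y ->
  (pred_r x y lam t - y t) ^+ 2 <= 4 * Yr x y lam Y T ^+ 2.
Proof.
move=> /andP[t_ge1 t_le] /andP[y_ge y_le].
have /andP[p_ge p_le] : - Yr x y lam Y T <= pred_r x y lam t <= Yr x y lam Y T.
  rewrite -ler_norml; apply: (le_bigmax_seq _ t) => //.
  by rewrite mem_index_iota t_ge1 ltnS.
have := Yr_ge Y T; nra.
Qed.

End OnlineRidge.

Lemma ln_det_Gmx_le (R : realType) d (x : nat -> 'cV[R]_d) lam T X : 0 < lam ->
  (forall t, (1 <= t <= T)%N -> dotv (x t) (x t) <= X ^+ 2) ->
  ln (\det (Gmx x T lam)) - ln (\det (Gmx x 0 lam)) <=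
  d%:R * ln (1 + T%:R * X ^+ 2 / (lam * d%:R)).
Proof.
move=> lam_gt0 x_le.
have -> : \det (Gmx x 0 lam) = lam ^+ d by rewrite /Gmx big_geq // addr0 det_scalar.
rewrite lnXn // -[ln lam *+ d]mulr_natl.
apply: le_trans (lerB (ln_det_gram_le _ _ lam_gt0) (lexx _)) _.
rewrite -mulrBr -/(Gmx x T lam).
have [d0|d_gt0] := posnP d; first by rewrite (_ : d%:R = 0) ?mul0r // d0.
apply: ler_wpM2l => //.
have dR_gt0 : 0 < d%:R :> R by rewrite ltr0n.
have tr_ge : lam * d%:R <= \tr (Gmx x T lam).
  by rewrite mxtrace_Gmx mulr_natr lerDl sumr_ge0 // => t _; exact: dotv_ge0.
have tr_le : \tr (Gmx x T lam) <= lam * d%:R + T%:R * X ^+ 2.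
  by rewrite mxtrace_Gmx mulr_natr lerD2l sum_nat_le_const.
have tr_gt0 : 0 < \tr (Gmx x T lam) by apply: lt_le_trans tr_ge; rewrite mulr_gt0.
have ratio_gt0 : 0 < 1 + T%:R * X ^+ 2 / (lam * d%:R).
  have : 0 <= T%:R * X ^+ 2 / (lam * d%:R).
    by apply: divr_ge0; [rewrite mulr_ge0 ?sqr_ge0 | rewrite ltW ?mulr_gt0].
  lra.
rewrite lerBlDl -lnM ?posrE ?ler_ln ?posrE ?divr_gt0 ?mulr_gt0 //.
rewrite ler_pdivrMr // (le_trans tr_le) // [leRHS](_ : _ = lam * d%:R + T%:R * X ^+ 2) //.
by field; rewrite !gt_eqF.
Qed.

Unset Implicit Arguments.

Theorem corollary1 (R : realType) (d : nat) (x : nat -> 'cV[R]_d) (y : nat -> R)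
    (lam : R) (T : nat) (X Y : R) (lamr : R) :
  0 < lam -> (1 <= T)%N -> 0 < X -> 0 < Y ->
  (forall t, (1 <= t <= T)%N -> Num.sqrt (dotv (x t) (x t)) <= X) ->
  (forall t, (1 <= t <= T)%N -> - Y <= y t <= Y) ->
  smallest_pos_eigenvalue (Gmx x T 0) lamr ->
  regret_r x y lam T <=
    4 * (Yr x y lam Y T) ^+ 2 * d%:R * ln (1 + T%:R * X ^+ 2 / (lam * d%:R))
    + lam * (Yr x y lam Y T) ^+ 2 * T%:R / lamr
  /\
  regret_f x y lam T <=
    1 * Y ^+ 2 * d%:R * ln (1 + T%:R * X ^+ 2 / (lam * d%:R))
    + lam * Y ^+ 2 * T%:R / lamr.
Proof.
move=> lam_gt0 _ X_gt0 Y_gt0 x_le y_le [_ lamr_gt0 lamr_le].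
have y2_le t : (1 <= t <= T)%N -> y t ^+ 2 <= Y ^+ 2.
  by move=> /y_le /andP[? ?]; nra.
have x2_le t : (1 <= t <= T)%N -> dotv (x t) (x t) <= X ^+ 2.
  move=> /x_le sx_le; rewrite -(sqr_sqrtr (dotv_ge0 (x t))).
  by rewrite ler_sqr ?nnegrE ?sqrtr_ge0 ?(ltW X_gt0).
have := le_trans (sum_leverage_le_ln_det x lam_gt0 T) (ln_det_Gmx_le lam_gt0 x2_le).
set S := \sum_(_ <= _ < _) _; set LOG := ln _ => S_le.
have LOG_scale B : 0 <= B -> B * S <= B * (d%:R * LOG) by move=> B_ge0; rewrite ler_wpM2l.
split.
- set YR := Yr x y lam Y T; have Y_le : Y <= YR := Yr_ge x y lam Y T.
  have yR2_le t : (1 <= t <= T)%N -> y t ^+ 2 <= YR ^+ 2.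
    by move=> /y2_le /le_trans; apply; nra.
  have := LOG_scale (4 * YR ^+ 2) (mulr_ge0 (ler0n _ 4) (sqr_ge0 YR)).
  have := regret_r_le lam_gt0 lamr_gt0 yR2_le lamr_le
    (fun t tT => sqr_pred_r_sub_le x lam tT (y_le t tT)).
  rewrite -/S -/YR; lra.
- have := LOG_scale (Y ^+ 2) (sqr_ge0 Y).
  have := regret_f_le lam_gt0 lamr_gt0 y2_le lamr_le; rewrite -/S; lra.
Qed.
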